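(* Let $N\ge2$, $d\ge1$, $1\le p\le q\le\infty$, let $S\subset\mathbb{Z}_N^d$ be nonempty and satisfy a $(p,q)$-restriction estimate with constant $C_{p,q}>0$, and let $E\subset\mathbb{Z}_N^d$ satisfy $$|E|^{1/p}\cdot|S|<\frac{N^d}{2C_{p,q}}.$$ Let $r(x)=\sum_{m\notin S}\chi(x\cdot m)\widehat{1_E}(m)$ and $G(x)=1$ if $|r(x)|\ge1/2$, $G(x)=0$ otherwise. Then $G=1_E$ on $\mathbb{Z}_N^d$.
   Context: $\chi(t)=e^{2\pi i t/N}$, $\hat h(m)=N^{-d}\sum_{x\in\mathbb{Z}_N^d}\chi(-x\cdot m)h(x)$, and $1_E$ is the indicator function of $E$. A $(p,q)$-restriction estimate holds for a nonempty $S$ with constant $C_{p,q}$ if for every $h:\mathbb{Z}_N^d\to\mathbb{C}$, $\big(\frac{1}{|S|}\sum_{m\in S}|\hat h(m)|^q\big)^{1/q}\le C_{p,q}N^{-d}\big(\sum_x|h(x)|^p\big)^{1/p}$ (for $q=\infty$ the left side is $\max_{m\in S}|\hat h(m)|$). *)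

From HB Require Import structures.
From mathcomp Require Import all_boot all_order all_algebra.
From mathcomp Require Import all_classical all_reals.
From mathcomp Require Import ereal exp trigo.
From mathcomp Require Import complex.
Set Implicit Arguments. Unset Strict Implicit. Unset Printing Implicit Defensive.
Import Order.TTheory GRing.Theory Num.Theory.
Local Open Scope ring_scope.

Notation normc := ComplexField.Normc.normc.

Section Fourier.
Variable R : realType.
Variables N d : nat.

Definition pt := {ffun 'I_d -> 'I_N}.

(* x . m, as an integer; chi only depends on it modulo N *)
Definition dot (x m : pt) : int := (\sum_(i < d) (x i : nat) * (m i : nat))%N%:Z.

Definition chi (t : int) : R[i] :=
  Complex (cos (2 * pi * t%:~R / N%:R)) (sin (2 * pi * t%:~R / N%:R)).

Definition fhat (h : pt -> R[i]) (m : pt) : R[i] :=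
  (N%:R ^+ d)^-1 * \sum_(x : pt) chi (- dot x m) * h x.

Definition indic (E : {set pt}) (x : pt) : R[i] := if x \in E then 1 else 0.

Definition lpnorm (p : \bar R) (f : pt -> R) : R :=
  match p with
  | EFin r => (\sum_(x : pt) f x `^ r) `^ r^-1
  | +oo%E => \big[Order.max/0]_(x : pt) f x
  | -oo%E => 0
  end.

Definition avgnorm (q : \bar R) (S : {set pt}) (f : pt -> R) : R :=
  match q with
  | EFin r => ((#|S|%:R)^-1 * \sum_(m in S) f m `^ r) `^ r^-1
  | +oo%E => \big[Order.max/0]_(m in S) f m
  | -oo%E => 0
  end.

Definition restriction_estimate (p q : \bar R) (S : {set pt}) (C : R) : Prop :=
  forall h : pt -> R[i],
    avgnorm q S (fun m => normc (fhat h m))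
      <= C * (N%:R ^+ d)^-1 * lpnorm p (fun x => normc (h x)).

(* |E|^{1/p}, with 1/+oo = 0 *)
Definition card_pow (p : \bar R) (E : {set pt}) : R :=
  match p with
  | EFin r => (#|E|%:R) `^ r^-1
  | _ => 1
  end.

Definition rfun (S E : {set pt}) (x : pt) : R[i] :=
  \sum_(m in ~: S) chi (dot x m) * fhat (indic E) m.

Definition Gfun (S E : {set pt}) (x : pt) : R[i] :=
  if 2^-1 <= normc (rfun S E x) then 1 else 0.

End Fourier.

From HB Require Import structures.
From mathcomp Require Import all_boot all_order all_algebra.
From mathcomp Require Import all_classical all_reals.
From mathcomp Require Import ereal exp trigo.
From mathcomp Require Import complex.
From mathcomp Require Import convex hoelder.
From mathcomp Require Import ring lra zify.
Import Order.TTheory GRing.Theory Num.Theory.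
Local Open Scope ring_scope.

(* By Fourier inversion, 1_E(x) is the sum of the low-frequency part
   sum_{m in S} chi(x.m) \hat{1_E}(m) and r(x).  The low-frequency part has
   modulus at most sum_{m in S} |\hat{1_E}(m)|, which the power-mean
   inequality bounds by |S| times the L^q average over S, hence by
   |S| C N^{-d} |E|^{1/p} < 1/2 through the restriction estimate.  So r(x)
   is within 1/2 of 1_E(x) in {0, 1}, and thresholding at 1/2 recovers it. *)

Section Character.
Variable R : realType.
Variable N : nat.

Local Notation chi := (chi R N).

Lemma chiD (s t : int) : chi (s + t) = chi s * chi t.
Proof.
rewrite /chi intrD mulrDr mulrDl cosD sinD.
by apply/eqP; rewrite eq_complex /= !eqxx /= [X in _ == X]addrC eqxx.
Qed.

Lemma chi0 : chi 0 = 1.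
Proof. by rewrite /chi !mulr0 mul0r cos0 sin0. Qed.

Lemma chiX (t : int) (n : nat) : chi t ^+ n = chi (t * n%:Z).
Proof.
elim: n => [|n IH]; first by rewrite expr0 mulr0 chi0.
by rewrite exprS IH -chiD -[n.+1]addn1 PoszD mulrDr mulr1 addrC.
Qed.

Lemma normc_chi (t : int) : normc (chi t) = 1.
Proof. by rewrite /chi /= cos2Dsin2 sqrtr1. Qed.

Hypothesis N_gt0 : (0 < N)%N.

Lemma chi_period : chi N%:Z = 1.
Proof.
rewrite /chi -mulrA mulfV ?mulr1; last by rewrite pnatr_eq0 -lt0n.
by rewrite mulr_natl cos2pi sin2pi.
Qed.

Lemma chi_mul_period (k : int) : chi (k * N%:Z) = 1.
Proof.
have chi_natmul (n : nat) : chi (n%:Z * N%:Z) = 1.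
  by rewrite mulrC -chiX chi_period expr1n.
case: k => n; first exact: chi_natmul.
have := chiD (- (n.+1%:Z * N%:Z)) (n.+1%:Z * N%:Z).
by rewrite addNr chi0 chi_natmul mulr1 NegzE mulNr.
Qed.

(* chi j = 1 forces cos(2 pi j / N) = 1 with an angle in (0, 2 pi),
   which contradicts the injectivity of cos on [0, pi]. *)
Lemma chi_neq1 (j : nat) : (0 < j < N)%N -> chi j%:Z != 1.
Proof.
move=> /andP[j_gt0 j_ltN]; apply/negP => /eqP; rewrite /chi => -[] + _.
set th := (2 * pi * _ / _) => cos_th.
have pi_gt0 := @pi_gt0 R.
have th_gt0 : 0 < th by rewrite divr_gt0 ?mulr_gt0 ?ltr0n.
have th_lt2pi : th < pi *+ 2.
  rewrite ltr_pdivrMr ?ltr0n // [j%:~R]/= mulr_natl ltr_pM2l ?ltr_nat //.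
  by rewrite pmulrn_lgt0.
have zero_in : (0 : R) \in `[0, pi] by rewrite in_itv /= lexx ltW.
have [th_lepi | pi_ltth] := leP th pi.
  have th0 : th = 0 by apply: cos_inj; rewrite ?cos_th ?cos0 // in_itv /= ltW.
  by move: th_gt0; rewrite th0 ltxx.
have : pi *+ 2 - th = 0.
  apply: cos_inj; rewrite ?cos0 //; last by rewrite addrC cosD2pi cosN.
  by rewrite in_itv /= subr_ge0 ltW //= lerBlDr mulr2n lerD2l ltW.
by move/eqP; rewrite subr_eq0 => /eqP th2pi; move: th_lt2pi; rewrite th2pi ltxx.
Qed.

End Character.

Lemma sum_expr_root_unity_eq0 (F : idomainType) (w : F) (n : nat) :
  w ^+ n = 1 -> w != 1 -> \sum_(k < n) w ^+ k = 0.
Proof.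
move=> wn w_neq1; have := subrX1 w n; rewrite wn subrr => /esym/eqP.
by rewrite mulf_eq0 subr_eq0 (negbTE w_neq1) => /eqP.
Qed.

Section Orthogonality.
Variable R : realType.
Variables N d : nat.
Hypothesis N_gt0 : (0 < N)%N.

Local Notation chi := (chi R N).
Local Notation pt := (pt N d).

Lemma sum_chiX_ord (a b : 'I_N) :
  \sum_(k < N) chi (a%:Z - b%:Z) ^+ k = if a == b then N%:R else 0.
Proof.
have [->|a_neq_b] := eqVneq a b.
  by rewrite subrr chi0 (eq_bigr (fun _ => 1)) ?sumr_const ?card_ord // => k _; rewrite expr1n.
apply: sum_expr_root_unity_eq0; first by rewrite chiX chi_mul_period.
have aN := ltn_ord a; have bN := ltn_ord b.
have [a_lt_b | b_lt_a | a_eq_b] := ltngtP a b; last by case/eqP: a_neq_b; apply: val_inj.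
- have -> : chi (a%:Z - b%:Z) = chi (N + a - b)%N%:Z.
    by rewrite -[LHS]mulr1 -(@chi_period R N N_gt0) -chiD; congr chi; lia.
  by apply: chi_neq1; lia.
- have -> : a%:Z - b%:Z = (a - b)%N%:Z by lia.
  by apply: chi_neq1; lia.
Qed.

Lemma dotB (x y m : pt) :
  dot x m - dot y m = \sum_i ((x i)%:Z - (y i)%:Z) * (m i)%:Z.
Proof.
rewrite /dot !(big_morph Posz PoszD (erefl 0%:Z)) -sumrB.
by apply: eq_bigr => i _; rewrite !PoszM mulrBl.
Qed.

(* The sum over m factors as a product over coordinates of geometric sums. *)
Lemma sum_chi_dotB (x y : pt) :
  \sum_(m : pt) chi (dot x m - dot y m) = if x == y then N%:R ^+ d else 0.
Proof.
under eq_bigr => m _.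
  rewrite dotB (big_morph _ (chiD R N) (chi0 R N)).
  under eq_bigr => i _ do rewrite -chiX.
over.
rewrite -(bigA_distr_bigA (fun i (k : 'I_N) => chi ((x i)%:Z - (y i)%:Z) ^+ k)) /=.
under eq_bigr => i _ do rewrite sum_chiX_ord.
have [->|x_neq_y] := eqVneq x y.
  by rewrite (eq_bigr (fun _ => N%:R)) ?prodr_const ?card_ord // => i _; rewrite eqxx.
have [i xi_neq_yi | x_eq_y] := pickP (fun i => x i != y i).
  by rewrite (bigD1 i) //= (negbTE xi_neq_yi) mul0r.
by case/eqP: x_neq_y; apply/ffunP => i; apply/eqP/negbFE/x_eq_y.
Qed.

Lemma fhat_inversion (h : pt -> R[i]) (x : pt) :
  \sum_(m : pt) chi (dot x m) * fhat h m = h x.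
Proof.
rewrite /fhat; set c := (N%:R ^+ d)^-1.
transitivity (c * \sum_(y : pt) h y * \sum_(m : pt) chi (dot x m - dot y m)).
  under [X in _ = _ * X]eq_bigr => y _ do rewrite big_distrr /=.
  rewrite exchange_big big_distrr /=; apply: eq_bigr => m _.
  rewrite mulrCA big_distrr /=; congr (_ * _); apply: eq_bigr => y _.
  by rewrite mulrA -chiD mulrC.
under eq_bigr => y _ do rewrite sum_chi_dotB.
rewrite (bigD1 x) //= eqxx big1 ?addr0; last first.
  by move=> y /negbTE; rewrite eq_sym => ->; rewrite mulr0.
by rewrite mulrCA /c mulVf ?mulr1 // expf_neq0 // pnatr_eq0 -lt0n.
Qed.

Lemma indic_eq_low_part_add_rfun (S E : {set pt}) (x : pt) :
  indic R E x = \sum_(m in S) chi (dot x m) * fhat (indic R E) m + rfun R S E x.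
Proof.
rewrite -{1}(fhat_inversion (indic R E) x) (bigID (mem S)) /=.
by congr (_ + _); apply: eq_bigl => m; rewrite finset.in_setC.
Qed.

End Orthogonality.

Section Norms.
Variable R : realType.

Lemma normc_ge0 (z : R[i]) : 0 <= normc z.
Proof. by case: z => a b; rewrite sqrtr_ge0. Qed.

Lemma normc_sum_le (I : finType) (P : pred I) (F : I -> R[i]) :
  normc (\sum_(i | P i) F i) <= \sum_(i | P i) normc (F i).
Proof.
apply: (big_ind2 (fun (a : R[i]) (b : R) => normc a <= b)) => //.
- by rewrite ComplexField.Normc.normc0.
- by move=> a b c e ab ce; apply: le_trans (le_normcD a c) (lerD ab ce).
Qed.

Lemma powR_convex (r l x y : R) : 1 <= r -> 0 <= l <= 1 -> 0 <= x -> 0 <= y ->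
  (l * x + (1 - l) * y) `^ r <= l * x `^ r + (1 - l) * y `^ r.
Proof.
move=> r_ge1 /andP[l_ge0 l_le1] x_ge0 y_ge0.
have := @convex_powR R r r_ge1 (Itv01 l_ge0 l_le1) x y.
by rewrite !inE /= !in_itv /= !andbT => /(_ x_ge0 y_ge0); rewrite !convRE.
Qed.

(* Jensen's inequality for t |-> t^r, by induction on the sequence: the mean
   of a :: t is the convex combination of a and of the mean of t with
   weight n/(n+1) on the latter. *)
Lemma powR_mean_le (r : R) (I : Type) (f : I -> R) (s : seq I) :
  1 <= r -> (forall i, 0 <= f i) -> (0 < size s)%N ->
  ((\sum_(i <- s) f i) / (size s)%:R) `^ r <= (\sum_(i <- s) f i `^ r) / (size s)%:R.
Proof.
move=> r_ge1 f_ge0; elim: s => [//|a [|b t] IH] _.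
  by rewrite !big_cons !big_nil !addr0 /= !divr1.
move: IH; set t' := b :: t => /(_ isT).
set n := size t'; set A := \sum_(i <- t') f i; set B := \sum_(i <- t') f i `^ r.
have -> : size (a :: t') = (n + 1)%N by rewrite addn1.
rewrite big_cons -/A big_cons -/B natrD => IH.
have n_gt0 : (0 : R) < n%:R by rewrite ltr0n.
have n1_gt0 : (0 : R) < n%:R + 1 by rewrite ltr_wpDl.
pose l : R := n%:R / (n%:R + 1).
have l01 : 0 <= l <= 1.
  by rewrite /l divr_ge0 ?(ltW n_gt0) ?(ltW n1_gt0) //= ler_pdivrMr // mul1r lerDl.
have mean_split (u v : R) :
    (u + v) / (n%:R + 1) = l * (v / n%:R) + (1 - l) * u.
  by rewrite /l; field; rewrite !gt_eqF.
rewrite !mean_split.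
apply: le_trans (powR_convex _ _ _ _ r_ge1 l01 _ (f_ge0 a)) _.
  by rewrite divr_ge0 ?sumr_ge0 ?ltW.
by rewrite lerD2r ler_wpM2l //; case/andP: l01.
Qed.

End Norms.

Section Estimates.
Variable R : realType.
Variables N d : nat.

Local Notation pt := (pt N d).

Lemma sum_le_avgnorm (q : \bar R) (S : {set pt}) (f : pt -> R) :
  (1 <= q)%E -> (forall m, 0 <= f m) -> (0 < #|S|)%N ->
  \sum_(m in S) f m <= #|S|%:R * avgnorm q S f.
Proof.
case: q => [r| |] //= q_ge1 f_ge0 S_gt0; last first.
  rewrite mulr_natl -sumr_const; apply: ler_sum => m mS.
  exact: le_bigmax_cond.
rewrite lee_fin in q_ge1; have r_gt0 : 0 < r by apply: lt_le_trans q_ge1.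
have := @powR_mean_le R r _ f (enum S) q_ge1 f_ge0.
rewrite -cardE !big_enum => /(_ S_gt0).
set n := #|S|%:R; set M := (\sum_(m in S) f m) / n => mean_le.
have n_gt0 : (0 : R) < n by rewrite ltr0n.
have M_ge0 : 0 <= M by rewrite divr_ge0 ?sumr_ge0 ?ltW.
rewrite -[X in X <= _](divfK (lt0r_neq0 n_gt0)) -/M mulrC ler_pM2l //.
have -> : M = (M `^ r) `^ r^-1 by rewrite -powRrM mulfV ?gt_eqF // powRr1.
apply: ge0_ler_powR; rewrite ?nnegrE ?invr_ge0 ?(ltW r_gt0) ?powR_ge0 //.
  by rewrite mulr_ge0 ?invr_ge0 ?(ltW n_gt0) ?sumr_ge0 // => m _; rewrite powR_ge0.
by rewrite mulrC.
Qed.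

Lemma lpnorm_indic_le (p : \bar R) (E : {set pt}) :
  (1 <= p)%E -> lpnorm p (fun x => normc (indic R E x)) <= card_pow p E.
Proof.
have normc_indic x : normc (indic R E x) = (x \in E)%:R.
  by rewrite /indic; case: ifP; rewrite ?ComplexField.Normc.normc1 ?ComplexField.Normc.normc0.
case: p => [r| |] //= p_ge1.
  rewrite lee_fin in p_ge1; have r_neq0 : r != 0 by rewrite gt_eqF // (lt_le_trans _ p_ge1).
  rewrite (eq_bigr (fun x => if x \in E then 1 else 0)); last first.
    by move=> x _; rewrite normc_indic; case: (x \in E); rewrite ?powR1 ?powR0.
  by rewrite -big_mkcond /= sumr_const.
by apply: bigmax_le => // x _; rewrite normc_indic; case: (x \in E).
Qed.

Lemma normc_low_part_le (p q : \bar R) (S : {set pt}) (C : R) (h : pt -> R[i]) (x : pt) :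
  (1 <= q)%E -> (0 < #|S|)%N -> restriction_estimate p q S C ->
  normc (\sum_(m in S) chi R N (dot x m) * fhat h m)
    <= #|S|%:R * (C * (N%:R ^+ d)^-1 * lpnorm p (fun y => normc (h y))).
Proof.
move=> q_ge1 S_gt0 estimate.
apply: le_trans (normc_sum_le _ _ _ _) _.
under eq_bigr => m _ do rewrite ComplexField.Normc.normcM normc_chi mul1r.
apply: le_trans (sum_le_avgnorm _ _ _ q_ge1 (fun m => normc_ge0 _ _) S_gt0) _.
by rewrite ler_pM2l ?ltr0n //; apply: estimate.
Qed.

Lemma Gfun_eq_indic (S E : {set pt}) (x : pt) :
  normc (indic R E x - rfun R S E x) < 2^-1 -> Gfun R S E x = indic R E x.
Proof.
rewrite /Gfun /indic; case: ifP => _ close.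
- rewrite ifT //; have := le_normcD (1 - rfun R S E x) (rfun R S E x).
  rewrite subrK ComplexField.Normc.normc1; lra.
- by rewrite sub0r normcN in close; rewrite ifF //; apply/negbTE; rewrite -ltNge.
Qed.

End Estimates.

Theorem theorem4 (R : realType) (N d : nat) (p q : \bar R) (S E : {set pt N d}) (C : R) :
  (2 <= N)%N -> (1 <= d)%N ->
  (1 <= p)%E -> (p <= q)%E ->
  (0 < #|S|)%N ->
  0 < C ->
  restriction_estimate p q S C ->
  card_pow p E * #|S|%:R < N%:R ^+ d / (2 * C) ->
  forall x : pt N d, Gfun R S E x = indic R E x.
Proof.
move=> N_ge2 _ p_ge1 p_le_q S_gt0 C_gt0 estimate small_E x.
have N_gt0 : (0 < N)%N by apply: leq_trans N_ge2.
have Nd_gt0 : (0 : R) < N%:R ^+ d by rewrite exprn_gt0 ?ltr0n.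
apply: Gfun_eq_indic.
rewrite [X in X - _](indic_eq_low_part_add_rfun _ _ _ N_gt0 S) addrK.
have q_ge1 := le_trans p_ge1 p_le_q.
apply: le_lt_trans (normc_low_part_le _ _ _ _ _ _ _ _ x q_ge1 S_gt0 estimate) _.
apply: le_lt_trans (_ : #|S|%:R * (C * (N%:R ^+ d)^-1 * card_pow p E) < _).
  by rewrite ler_pM2l ?ltr0n // ler_pM2l ?divr_gt0 //; apply: lpnorm_indic_le.
have -> : (2^-1 : R) = N%:R ^+ d / (2 * C) * (C / N%:R ^+ d).
  by field; rewrite !gt_eqF.
by rewrite mulrCA mulrC [_ * card_pow _ _]mulrC ltr_pM2r ?divr_gt0.
Qed.
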